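(* Let $U\subseteq L_{\mathrm{up}}$ be a set of up-links such that the sets $P_u$, $u\in U$, are pairwise disjoint. Then the dependency graph of $U$ is a branching, i.e. it contains no directed cycle and every vertex has in-degree at most one.
   Context: Let $(G=(V,E),L,w)$ be a WTAP instance (spanning tree $G$, links $L\subseteq\binom V2$, weights $w>0$) with a fixed root $r\in V$, and let $F\subseteq L$ be a WTAP solution, i.e. $\bigcup_{\ell\in F}P_\ell=E$, where $P_\ell$ is the edge set of the tree path between the endpoints of $\ell$ and $V_\ell$ its vertex set. Ancestors of $v$ are the vertices on the $r$-$v$ path in $G$ (including $r$ and $v$); descendants are defined reciprocally. $\mathrm{apex}(\ell)$ is the vertex of $V_\ell$ closest to $r$. An up-link is a link $\{t,b\}$ with $t$ an ancestor of $b$; $L_{\mathrm{up}}$ is the set of up-links. For $v\in V$ let $B_v=\{\ell\in F\colon\mathrm{apex}(\ell)\text{ is a descendant of }v\}$. For an up-link $u=\{t,b\}$ with $t$ an ancestor of $b$, let $v_u$ be the ancestor of $t$ farthest from $r$ such that $P_u\subseteq\bigcup_{\ell\in B_{v_u}}P_\ell$, and fix $F_u\subseteq B_{v_u}$ inclusion-wise minimal with $P_u\subseteq\bigcup_{\ell\in F_u}P_\ell$. For $\ell\in F_u$ let $P_{u,\ell}=P_u\setminus\bigcup_{\bar\ell\in F_u\setminus\{\ell\}}P_{\bar\ell}$; these sets are nonempty, pairwise disjoint, and each is the edge set of a path. Define $\ell_1\prec_u\ell_2$ iff the edges of $P_{u,\ell_1}$ appear before those of $P_{u,\ell_2}$ on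 the $t$-$b$ path in $G$. If $\ell_1\prec_u\cdots\prec_u\ell_q$ are the links of $F_u$, let $A_u=\{(\ell_i,\ell_{i+1})\colon i=1,\dots,q-1\}$. The dependency graph of a set $U\subseteq L_{\mathrm{up}}$ is the directed graph with vertex set $F$ whose arc set is the disjoint union of the sets $A_u$, $u\in U$. *)

From HB Require Import structures.
From mathcomp Require Export all_boot.
From Stdlib Require Export Relations.

Set Implicit Arguments.
Unset Strict Implicit.
Unset Printing Implicit Defensive.

Section WTAP.
Variable V : finType.

Definition adj (E : {set {set V}}) : rel V := fun x y => [set x; y] \in E.

Definition spath (E : {set {set V}}) (x y : V) (p : seq V) : bool :=
  [&& path (adj E) x p, last x p == y & uniq (x :: p)].

Definition path_edges (x : V) (p : seq V) : seq {set V} :=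
  pairmap (fun a b => [set a; b]) x p.

Definition is_spanning_tree (E : {set {set V}}) : Prop :=
  [/\ (forall e, e \in E -> #|e| = 2),
      (forall x y : V, exists p, spath E x y p) &
      (forall (x : V) (p : seq V), 2 <= size p -> uniq (x :: p) ->
          path (adj E) x p -> ~~ adj E (last x p) x)].

Definition tree_pathE (E : {set {set V}}) (x y : V) (e : {set V}) : Prop :=
  exists p, spath E x y p /\ e \in path_edges x p.
Definition tree_pathV (E : {set {set V}}) (x y w : V) : Prop :=
  exists p, spath E x y p /\ w \in x :: p.

Definition link_edges (E : {set {set V}}) (l e : {set V}) : Prop :=
  exists x y, [/\ l = [set x; y], x != y & tree_pathE E x y e].
Definition link_verts (E : {set {set V}}) (l : {set V}) (w : V) : Prop :=
  exists x y, [/\ l = [set x; y], x != y & tree_pathV E x y w].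

Definition ancestor (E : {set {set V}}) (r a v : V) : Prop := tree_pathV E r v a.

Definition closer_eq (E : {set {set V}}) (r a w : V) : Prop :=
  forall pa pw, spath E r a pa -> spath E r w pw -> size pa <= size pw.

Definition is_apex (E : {set {set V}}) (r : V) (l : {set V}) (a : V) : Prop :=
  link_verts E l a /\ forall w, link_verts E l w -> closer_eq E r a w.

Definition up_link (E : {set {set V}}) (r : V) (u : {set V}) : Prop :=
  exists t b, [/\ u = [set t; b], t != b & ancestor E r t b].

Definition Bset (E F : {set {set V}}) (r v : V) (l : {set V}) : Prop :=
  l \in F /\ exists a, is_apex E r l a /\ ancestor E r v a.

Definition covers (E : {set {set V}}) (S : {set V} -> Prop) (t b : V) : Prop :=
  forall e, tree_pathE E t b e -> exists l, S l /\ link_edges E l e.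

Definition is_vu (E F : {set {set V}}) (r t b v : V) : Prop :=
  [/\ ancestor E r v t, covers E (Bset E F r v) t b &
      forall v', ancestor E r v' t -> covers E (Bset E F r v') t b ->
                 closer_eq E r v' v].

Definition is_Fu (E F : {set {set V}}) (r t b : V) (Fu : {set {set V}}) : Prop :=
  exists v, [/\ is_vu E F r t b v,
               (forall l, l \in Fu -> Bset E F r v l),
               covers E (fun l => l \in Fu) t b &
               forall S : {set {set V}}, S \proper Fu ->
                 ~ covers E (fun l => l \in S) t b].

Definition private_edges (E : {set {set V}}) (t b : V) (Fu : {set {set V}})
    (l e : {set V}) : Prop :=
  tree_pathE E t b e /\
  ~ (exists l', [/\ l' \in Fu, l' != l & link_edges E l' e]).

Definition prec (E : {set {set V}}) (t b : V) (Fu : {set {set V}})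
    (l1 l2 : {set V}) : Prop :=
  exists p, spath E t b p /\
    forall e1 e2, private_edges E t b Fu l1 e1 -> private_edges E t b Fu l2 e2 ->
      index e1 (path_edges t p) < index e2 (path_edges t p).

Definition arcs_of (E : {set {set V}}) (t b : V) (Fu : {set {set V}})
    (l1 l2 : {set V}) : Prop :=
  exists s : seq {set V},
    [/\ perm_eq s (enum Fu),
        (forall i j, i < j -> j < size s -> prec E t b Fu (nth set0 s i) (nth set0 s j)) &
        exists i, [/\ i.+1 < size s, l1 = nth set0 s i & l2 = nth set0 s i.+1]].

(* arcs of the dependency graph of U: an arc (l1,l2) labelled by u in U
   (the arc set is the disjoint union of the A_u) *)
Definition dep_arc (E : {set {set V}}) (r : V) (U : {set {set V}})
    (Fu : {set V} -> {set {set V}}) (u l1 l2 : {set V}) : Prop :=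
  u \in U /\ exists t b,
    [/\ u = [set t; b], t != b, ancestor E r t b & arcs_of E t b (Fu u) l1 l2].

End WTAP.

Definition branching (A T : Type) (arc : A -> T -> T -> Prop) : Prop :=
  (forall x : T, ~ clos_trans T (fun x y => exists a, arc a x y) x x) /\
  (forall (a a' : A) (x x' y : T), arc a x y -> arc a' x' y -> a = a' /\ x = x').

From Stdlib Require Import Classical.
From mathcomp Require Import zify.
Set Implicit Arguments.
Unset Strict Implicit.
Unset Printing Implicit Defensive.

(* Orient the tree away from r and name each edge by its lower endpoint c: the edge lies on
   the tree path of a link {x, y} iff exactly one of x, y is a descendant of c (the link cuts
   c).  For an arc (l1, l2) of A_u pick private edges c1 of l1 and c2 of l2 on the path of u;
   c1 lies above c2.  As l2 does not cut c1 but has an endpoint below c2, all of l2 lies below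
   c1, so lca(l2) lies between c1 and c2, while lca(l1) lies strictly above c1.  Hence the
   depth of the lca grows along arcs, which excludes cycles; and the edge above lca(l2) lies
   on P_u, so by disjointness all arcs entering l2 come from one up-link u, inside which the
   predecessor is unique because the antisymmetric order of F_u fixes its enumeration. *)

Lemma clos_trans_ltn (T : Type) (R : T -> T -> Prop) (f : T -> nat) :
  (forall x y, R x y -> f x < f y) -> forall x y, clos_trans T R x y -> f x < f y.
Proof. by move=> Rf x y; elim=> [|? ? ? _ ? _]; [exact: Rf | exact: ltn_trans]. Qed.

Lemma perm_nth_sorted_eq (T : eqType) (x0 : T) (R : T -> T -> Prop) (s1 s2 : seq T) :
  {in s1 &, forall x y, R x y -> ~ R y x} ->
  (forall i j, i < j -> j < size s1 -> R (nth x0 s1 i) (nth x0 s1 j)) ->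
  (forall i j, i < j -> j < size s2 -> R (nth x0 s2 i) (nth x0 s2 j)) ->
  perm_eq s1 s2 -> s1 = s2.
Proof.
have head_first x s y : y \in s ->
    (forall i j, i < j -> j < size (x :: s) -> R (nth x0 (x :: s) i) (nth x0 (x :: s) j)) ->
    R x y.
  move=> ys /(_ 0 (index y s).+1 isT) /=; rewrite nth_index //; apply.
  by rewrite ltnS index_mem.
elim: s1 s2 => [|x s1 IH] [|y s2] asym sort1 sort2 perm12 //.
- by move/perm_size: perm12.
- by move/perm_size: perm12.
case: (eqVneq x y) sort2 perm12 => [<- | xy] sort2 perm12.
  congr (_ :: _); apply: IH; last by rewrite -(perm_cons x).
  - by move=> u v us vs; apply: asym; apply: mem_behead.
  - by move=> i j; apply: (sort1 i.+1 j.+1).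
  - by move=> i j; apply: (sort2 i.+1 j.+1).
have ys1 : y \in s1.
  by have := perm_mem perm12 y; rewrite !inE eqxx eq_sym (negbTE xy) /= => ->.
have xs2 : x \in s2.
  by have := perm_mem perm12 x; rewrite !inE eqxx (negbTE xy) /= => <-.
have ys : y \in x :: s1 by rewrite inE ys1 orbT.
by case: (asym x y (mem_head _ _) ys (head_first _ _ _ ys1 sort1)
  (head_first _ _ _ xs2 sort2)).
Qed.

Lemma exists_set2 (T : finType) (P : pred T) x y :
  [exists z in [set x; y], P z] = P x || P y.
Proof.
apply/existsP/orP => [[z /andP [/set2P [->|->] Pz]]|[Px|Py]]; [by left|by right| |].
- by exists x; rewrite set21.
- by exists y; rewrite set22.
Qed.

Lemma path_edges_sub (T : finType) (x : T) p e : e \in path_edges x p -> {subset e <= x :: p}.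
Proof.
elim: p x => [|a p IH] x //=; rewrite inE => /orP [/eqP -> z|/IH sub z /sub].
- by case/set2P=> ->; rewrite !inE eqxx ?orbT.
- by move=> zap; rewrite inE zap orbT.
Qed.

Lemma path_edges_uniq (T : finType) (x : T) p : uniq (x :: p) -> uniq (path_edges x p).
Proof.
elim: p x => [|a p IH] x //= /andP [xap uap]; rewrite IH // andbT.
by apply: contra xap => /path_edges_sub /(_ x (set21 x a)).
Qed.

Lemma path_edges_take (T : finType) (x : T) p n :
  path_edges x (take n p) = take n (path_edges x p).
Proof. by elim: p x n => [|a p IH] x [|n] //=; rewrite -IH. Qed.

Section SpanningTree.
Variables (V : finType) (E : {set {set V}}).
Hypothesis tree : is_spanning_tree E.

Lemma adjC x y : adj E x y = adj E y x.
Proof. by rewrite /adj setUC. Qed.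

Lemma adj_neq x y : adj E x y -> x != y.
Proof.
by case: tree => card2 _ _ /card2; case: eqVneq => // ->; rewrite setUid cards1.
Qed.

Lemma spath_exists x y : exists p, spath E x y p.
Proof. by case: tree. Qed.

Lemma spath_nil x p : spath E x x p -> p = [::].
Proof.
case: p => // a p /and3P [_ /eqP xp /andP [+ _]].
by rewrite -{1}xp /= mem_last.
Qed.

Lemma spath_behead x y a p : spath E x y (a :: p) -> spath E a y p.
Proof. by rewrite /spath => /and3P [/= /andP [_ ->] -> /andP [_ ->]]. Qed.

(* Otherwise x, head a s, ..., a would be a cycle. *)
Lemma chord_head x s a : path (adj E) x s -> uniq (x :: s) -> adj E x a ->
  a \in s -> a = head a s.
Proof.
move=> xs uxs xa as_; apply/eqP/negPn/negP => a_nhead.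
case: tree => _ _ acyclic.
have i_gt0 : 0 < index a s.
  by move: a_nhead as_; case: s {xs uxs} => //= b s; rewrite eq_sym; case: eqP.
set i := index a s; have i_lt : i < size s by rewrite index_mem.
have size_ge2 : 1 < size (take i.+1 s) by rewrite size_take_min; lia.
have := acyclic x _ size_ge2 (take_uniq i.+2 uxs) (take_path _ xs).
by rewrite (take_nth x) // last_rcons nth_index // adjC xa.
Qed.

Lemma spath_head_eq x y a p b q :
  spath E x y (a :: p) -> spath E x y (b :: q) -> a = b.
Proof.
elim: p x a b q => [|a2 p IH] x a b q sp sq; have /and3P [xbq /eqP qy ubq] := sq;
  have xa : adj E x a by case/and3P: sp => /andP [].
all: have [abq|a_nbq] := boolP (a \in b :: q); first exact: (chord_head xbq ubq xa abq).
  by case/and3P: sp => _ /= /eqP ay _; move: a_nbq; rewrite ay -qy /= mem_last.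
(* a is not on the second path: prepend a to it and compare the tails. *)
have sp' : spath E a y (x :: b :: q).
  apply/and3P; split; [by rewrite /= adjC xa | by rewrite -qy |].
  by rewrite cons_uniq ubq andbT in_cons negb_or a_nbq andbT eq_sym adj_neq.
have a2x := IH _ _ _ _ (spath_behead sp) sp'.
by case/and3P: sp => _ _; rewrite a2x /= !inE eqxx !orbT.
Qed.

Lemma spath_uniq x y p q : spath E x y p -> spath E x y q -> p = q.
Proof.
elim: p x q => [|a p IH] x [|b q] sp sq //.
- by case/and3P: sp sq => _ /= /eqP <- _ /spath_nil.
- by case/and3P: sq sp => _ /= /eqP <- _ /spath_nil.
- have ab := spath_head_eq sp sq; subst b.
  by rewrite (IH _ _ (spath_behead sp) (spath_behead sq)).
Qed.

Section Rooted.
Variable r : V.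

Definition root_path v : seq V := xchoose (spath_exists r v).
Definition anc a v : bool := a \in r :: root_path v.
Definition depth v : nat := size (root_path v).

Lemma spath_root_path v : spath E r v (root_path v).
Proof. exact: xchooseP. Qed.

Lemma root_pathE v p : spath E r v p -> root_path v = p.
Proof. exact: spath_uniq (spath_root_path v). Qed.

Lemma last_root_path v : last r (root_path v) = v.
Proof. by case/and3P: (spath_root_path v) => _ /eqP. Qed.

Lemma ancestorP a v : ancestor E r a v <-> anc a v.
Proof.
split=> [[p [/root_pathE <-]] //|av].
by exists (root_path v); split=> //; apply: spath_root_path.
Qed.

Lemma anc_refl v : anc v v.
Proof. by rewrite /anc -{1}(last_root_path v) mem_last. Qed.

Lemma anc_root v : anc r v.
Proof. exact: mem_head. Qed.

Lemma anc_prefix a v : anc a v ->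
  r :: root_path a = take (index a (r :: root_path v)).+1 (r :: root_path v).
Proof.
move=> av; set i := index a _; congr (_ :: _); apply: root_pathE.
have /and3P [pv _ uv] := spath_root_path v.
apply/and3P; split; [exact: take_path | | exact: (take_uniq i.+1 uv)].
have -> : last r (take i (root_path v)) = last r (take i.+1 (r :: root_path v)) by [].
by rewrite (take_nth r) ?index_mem // last_rcons nth_index.
Qed.

Lemma anc_indexE a b v : anc a v ->
  anc b a = anc b v && (index b (r :: root_path v) <= index a (r :: root_path v)).
Proof.
move=> av; rewrite {1}/anc (anc_prefix av).
have [bv|nbv] := boolP (anc b v); first by rewrite in_take.
by apply/negbTE; apply: contra nbv; apply: mem_take.
Qed.

Lemma anc_trans b a v : anc b a -> anc a v -> anc b v.
Proof. by move=> + av; rewrite (anc_indexE _ av) => /andP []. Qed.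

Lemma anc_total a b v : anc a v -> anc b v -> anc a b || anc b a.
Proof. by move=> av bv; rewrite (anc_indexE _ av) (anc_indexE _ bv) av bv leq_total. Qed.

Lemma depth_anc a v : anc a v -> depth a <= depth v.
Proof. by move=> /anc_prefix /(congr1 size); rewrite size_take_min /= /depth; lia. Qed.

Lemma depth_anc_lt a v : anc a v -> a != v -> depth a < depth v.
Proof.
move=> av; rewrite ltn_neqAle depth_anc // andbT; apply: contra => /eqP da_dv.
have pre := anc_prefix av.
have : size (r :: root_path v) <= (index a (r :: root_path v)).+1.
  by move: (congr1 size pre); rewrite size_take_min /=; rewrite /depth in da_dv; lia.
move=> /take_oversize; rewrite -pre => /(congr1 (last r)) /=.
by rewrite !last_root_path => ->.
Qed.

Lemma anc_antisym a b : anc a b -> anc b a -> a = b.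
Proof.
move=> ab ba; case: (eqVneq a b) => // neq.
by have := depth_anc_lt ab neq; have := depth_anc ba; lia.
Qed.

(* [parent r = r] is a junk value: [pedge c] is a tree edge only for [c != r]. *)
Definition parent c : V := last r (belast r (root_path c)).
Definition pedge c : {set V} := [set parent c; c].

Lemma root_path_parent c : c != r -> root_path c = rcons (root_path (parent c)) c.
Proof.
rewrite /parent => cr; have := spath_root_path c; have := last_root_path c.
case/lastP: (root_path c) => [/= rc|p z]; first by rewrite rc eqxx in cr.
rewrite last_rcons belast_rcons => -> /and3P [pz _ uz] /=; congr rcons.
apply/esym/root_pathE; apply/and3P; split=> //.
- by move: pz; rewrite rcons_path => /andP [].
- by move: uz; rewrite -rcons_cons rcons_uniq => /andP [].
Qed.

Lemma anc_parentE z c : c != r -> anc z c = (z == c) || anc z (parent c).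
Proof. by move=> cr; rewrite /anc {1}(root_path_parent cr) -rcons_cons mem_rcons inE. Qed.

Lemma depth_parent c : c != r -> depth c = (depth (parent c)).+1.
Proof. by move=> cr; rewrite /depth {1}(root_path_parent cr) size_rcons. Qed.

Lemma parent_adj x a : adj E x a -> ~~ anc a x -> a != r /\ parent a = x.
Proof.
move=> xa nax; have ar : a != r by apply: contraNneq nax => ->; apply: anc_root.
split=> //; have /and3P [px /eqP lx ux] := spath_root_path x.
have spa : spath E r a (rcons (root_path x) a).
  by apply/and3P; rewrite rcons_path px lx last_rcons -rcons_cons rcons_uniq nax ux.
have := root_path_parent ar; rewrite (root_pathE spa) => /rcons_inj [] /(congr1 (last r)).
by rewrite !last_root_path.
Qed.

Lemma adj_parent x a : adj E x a ->
  (a != r /\ parent a = x) \/ (x != r /\ parent x = a).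
Proof.
move=> xa; have [ax|nax] := boolP (anc a x); last by left; apply: parent_adj.
have [xa'|nxa] := boolP (anc x a); last by right; apply: parent_adj; rewrite // adjC.
by have := adj_neq xa; rewrite (anc_antisym xa' ax) eqxx.
Qed.

Lemma pedge_inj c a : c != r -> a != r -> pedge c = pedge a -> c = a.
Proof.
move=> cr ar eca; have : c \in pedge a by rewrite -eca set22.
case/set2P=> [ca|] //; have : a \in pedge c by rewrite eca set22.
case/set2P=> [ac|->] //.
by have := depth_parent cr; have := depth_parent ar; rewrite -ac -ca; lia.
Qed.

Lemma anc_adj_pedge x a c : adj E x a -> c != r ->
  (anc c x != anc c a) = (pedge c == [set x; a]).
Proof.
move=> xa cr.
wlog [ar pa] : x a xa / a != r /\ parent a = x.
  move=> W; case: (adj_parent xa) => [|xp]; first exact: W.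
  by rewrite eq_sym setUC; apply: W; rewrite // adjC.
have -> : (pedge c == [set x; a]) = (c == a).
  apply/eqP/eqP => [eca|->]; last by rewrite /pedge pa.
  by apply: pedge_inj; rewrite // eca /pedge pa.
rewrite (anc_parentE _ ar) pa; case: (eqVneq c a) => [->|_]; last by rewrite /= eqxx.
by case: (boolP (anc a x)) => // ax; have := depth_anc ax; rewrite depth_parent // pa; lia.
Qed.

Lemma walk_parity x p c : path (adj E) x p -> c != r ->
  (anc c x != anc c (last x p)) = odd (count_mem (pedge c) (path_edges x p)).
Proof.
move=> + cr; elim: p x => [|a p IH] x /=; first by rewrite eqxx.
case/andP=> xa /IH; rewrite oddD oddb => <-; rewrite (eq_sym [set x; a]) -anc_adj_pedge //.
by case: (anc c x); case: (anc c a); case: (anc c (last a p)).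
Qed.

Lemma spath_parity x y p c : spath E x y p -> c != r ->
  (pedge c \in path_edges x p) = (anc c x != anc c y).
Proof.
case/and3P=> px /eqP <- uxp cr.
by rewrite walk_parity // count_uniq_mem ?path_edges_uniq //; case: (_ \in _).
Qed.

Lemma path_edges_pedge x p e : path (adj E) x p -> e \in path_edges x p ->
  exists2 c, c != r & e = pedge c.
Proof.
elim: p x => [|a p IH] x //= /andP [xa /IH {}IH]; rewrite inE => /orP [/eqP ->|//].
case: (adj_parent xa) => [[ar <-]|[xr <-]]; first by exists a.
by exists x; rewrite // /pedge setUC.
Qed.

Lemma tree_pathE_pedge x y c : c != r ->
  tree_pathE E x y (pedge c) <-> anc c x != anc c y.
Proof.
move=> cr; split=> [[p [sp]]|]; first by rewrite (spath_parity sp cr).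
by have [p sp] := spath_exists x y; exists p; rewrite (spath_parity sp cr).
Qed.

Lemma tree_pathEP x y e : tree_pathE E x y e ->
  exists c, [/\ c != r, e = pedge c & anc c x != anc c y].
Proof.
case=> p [sp ep]; have [|c cr ec] := path_edges_pedge _ ep; first by case/and3P: sp.
by exists c; rewrite -(spath_parity sp cr) -ec.
Qed.

Lemma anc_down t b c : anc t b -> (anc c t != anc c b) = ~~ anc c t && anc c b.
Proof. by move=> tb; case ct: (anc c t); rewrite ?(anc_trans ct tb) //; case: (anc c b). Qed.

Lemma tree_path_order t b p c1 c2 : anc t b -> spath E t b p -> c1 != r -> c2 != r ->
  pedge c1 \in path_edges t p -> pedge c2 \in path_edges t p ->
  index (pedge c1) (path_edges t p) < index (pedge c2) (path_edges t p) -> anc c1 c2.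
Proof.
move=> tb sp c1r c2r e1p e2p lt12.
have /andP [c1t c1b] : ~~ anc c1 t && anc c1 b by rewrite -anc_down // -(spath_parity sp).
have /andP [c2t c2b] : ~~ anc c2 t && anc c2 b by rewrite -anc_down // -(spath_parity sp).
(* The prefix of p through pedge c1 ends below c1 but not below c2. *)
set n := (index (pedge c1) (path_edges t p)).+1.
set z := last t (take n p).
have sq : spath E t z (take n p).
  case/and3P: sp => pp _ up.
  by apply/and3P; split; [exact: take_path | | exact: (take_uniq n.+1 up)].
have z1 : anc c1 z.
  move: (spath_parity sq c1r); rewrite path_edges_take in_take // ltnSn (negbTE c1t).
  by case: (anc c1 z).
have z2 : ~~ anc c2 z.
  move: (spath_parity sq c2r); rewrite path_edges_take in_take // ltnNge lt12 (negbTE c2t).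
  by case: (anc c2 z).
have /orP [//|c2c1] := anc_total c1b c2b.
by rewrite (anc_trans c2c1 z1) in z2.
Qed.

Lemma up_link_ends t b t' b' : [set t; b] = [set t'; b'] -> t != b -> t' != b' ->
  anc t b -> anc t' b' -> t' = t /\ b' = b.
Proof.
move=> tb_eq tb tb' anc_tb anc_tb'.
have t'_in : t' \in [set t; b] by rewrite tb_eq set21.
have b'_in : b' \in [set t; b] by rewrite tb_eq set22.
case/set2P: t'_in b'_in anc_tb' tb' => -> /set2P [] -> //; rewrite ?eqxx // => anc_bt _.
by rewrite (anc_antisym anc_tb anc_bt).
Qed.

Definition cuts c (l : {set V}) : bool :=
  [exists z in l, anc c z] && [exists z in l, ~~ anc c z].

Lemma cuts_set2 c x y : cuts c [set x; y] = (anc c x != anc c y).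
Proof.
rewrite /cuts (exists_set2 (anc c)) (exists_set2 (fun z => ~~ anc c z)).
by case: (anc c x); case: (anc c y).
Qed.

Lemma link_edges_cuts l c : c != r -> link_edges E l (pedge c) -> cuts c l.
Proof. by move=> cr [x [y [-> _ /(tree_pathE_pedge _ _ cr)]]]; rewrite cuts_set2. Qed.

Lemma cuts_link_edges x y c : x != y -> c != r -> cuts c [set x; y] ->
  link_edges E [set x; y] (pedge c).
Proof.
by move=> xy cr; rewrite cuts_set2 => cxy; exists x, y; split=> //; apply/tree_pathE_pedge.
Qed.

Definition common_anc (l : {set V}) : {set V} := [set z | [forall w in l, anc z w]].

(* For a link, this is its apex. *)
Definition lca (l : {set V}) : V := [arg max_(z > r in common_anc l) depth z].

Lemma root_common_anc l : r \in common_anc l.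
Proof. by rewrite inE; apply/forall_inP => w _; apply: anc_root. Qed.

Lemma common_anc_anc (l : {set V}) z w : z \in common_anc l -> w \in l -> anc z w.
Proof. by rewrite inE => /forall_inP; apply. Qed.

Lemma lca_common_anc l : lca l \in common_anc l.
Proof. by rewrite /lca; case: arg_maxnP => //; apply: root_common_anc. Qed.

Lemma anc_lca (l : {set V}) w z : w \in l -> z \in common_anc l -> anc z (lca l).
Proof.
rewrite /lca => wl zl; case: arg_maxnP => [|m ml m_max]; first exact: root_common_anc.
have /orP [//|mz] := anc_total (common_anc_anc zl wl) (common_anc_anc ml wl).
have [<-|mnz] := eqVneq m z; first exact: anc_refl.
by have := depth_anc_lt mz mnz; have := m_max z zl; lia.
Qed.

Lemma common_anc_cuts l c z : cuts c l -> z \in common_anc l -> anc z c /\ z != c.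
Proof.
case/andP=> /exists_inP [x xl cx] /exists_inP [y yl ncy] zl.
have /orP [zc|cz] := anc_total (common_anc_anc zl xl) cx.
  by split=> //; apply: contraNneq ncy => <-; apply: common_anc_anc zl yl.
by rewrite (anc_trans cz (common_anc_anc zl yl)) in ncy.
Qed.

Lemma mem_common_anc l c1 c2 : ~~ cuts c1 l -> cuts c2 l -> anc c1 c2 ->
  c1 \in common_anc l.
Proof.
move=> nc1 /andP [/exists_inP [x xl c2x] _] c1c2.
have c1x : [exists z in l, anc c1 z] by apply/exists_inP; exists x; last exact: anc_trans c2x.
move: nc1; rewrite /cuts c1x /= => /exists_inPn all_below.
by rewrite inE; apply/forall_inP => w /all_below /negPn.
Qed.

Lemma lca_between l c1 c2 : ~~ cuts c1 l -> cuts c2 l -> anc c1 c2 ->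
  anc c1 (lca l) /\ anc (lca l) c2.
Proof.
move=> nc1 c2l c1c2; split; last by case: (common_anc_cuts c2l (lca_common_anc l)).
case/andP: (c2l) => /exists_inP [w wl _] _.
exact: anc_lca wl (mem_common_anc nc1 c2l c1c2).
Qed.

Lemma lca_lt l1 l2 c1 c2 : cuts c1 l1 -> ~~ cuts c1 l2 -> cuts c2 l2 -> anc c1 c2 ->
  depth (lca l1) < depth (lca l2).
Proof.
move=> c1l1 nc1l2 c2l2 c1c2.
have [l1c1 l1_neq_c1] := common_anc_cuts c1l1 (lca_common_anc l1).
have [c1l _] := lca_between nc1l2 c2l2 c1c2.
apply: depth_anc_lt (anc_trans l1c1 c1l) _.
by apply: contraNneq l1_neq_c1 => l12; apply/eqP/(anc_antisym l1c1); rewrite l12.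
Qed.

Lemma tree_path_pedge_lca t b l c1 c2 : ~~ cuts c1 l -> cuts c2 l -> anc c1 c2 ->
  ~~ anc c1 t -> anc c2 b -> tree_pathE E t b (pedge (lca l)).
Proof.
move=> nc1l c2l c1c2 c1t c2b; have [c1l lc2] := lca_between nc1l c2l c1c2.
have lt : ~~ anc (lca l) t by apply: contra c1t; apply: anc_trans.
apply/tree_pathE_pedge; last by rewrite (negbTE lt) (anc_trans lc2 c2b).
by apply: contraNneq lt => ->; apply: anc_root.
Qed.

End Rooted.

End SpanningTree.

Lemma arcs_of_prec (V : finType) (E : {set {set V}}) t b Fu l1 l2 :
  arcs_of E t b Fu l1 l2 -> [/\ l1 \in Fu, l2 \in Fu & prec E t b Fu l1 l2].
Proof.
case=> s [perm_s sorted_s [i [lt_i -> ->]]].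
have in_Fu j : j < size s -> nth set0 s j \in Fu.
  by move=> lt_j; rewrite -mem_enum -(perm_mem perm_s) mem_nth.
by split; [apply: in_Fu; lia | apply: in_Fu | apply: sorted_s].
Qed.

Section MinimalCover.
Variables (V : finType) (E : {set {set V}}).
Hypothesis tree : is_spanning_tree E.
Variables (r t b : V) (Fu : {set {set V}}).
Hypothesis cover : covers E (fun l => l \in Fu) t b.
Hypothesis minimal : forall S : {set {set V}}, S \proper Fu -> ~ covers E (fun l => l \in S) t b.

Local Notation anc := (anc tree r).
Local Notation cuts := (cuts tree r).

Lemma exists_private_edge l : l \in Fu -> exists e, private_edges E t b Fu l e /\ link_edges E l e.
Proof.
move=> lF; have [e not_imp] := not_all_ex_not _ _ (minimal (properD1 lF)).
have [tbe not_covered] := imply_to_and _ _ not_imp.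
have [l' [l'F l'e]] := cover tbe.
have l'l : l' = l.
  by apply/eqP; apply: contra_notT not_covered => l'l; exists l'; rewrite in_setD1 l'l.
subst l'; exists e; split=> //; split=> // -[l'' [l''F l''l l''e]]; apply: not_covered.
by exists l''; rewrite in_setD1 l''l.
Qed.

Lemma prec_asym l l' : l \in Fu -> l' \in Fu ->
  prec E t b Fu l l' -> ~ prec E t b Fu l' l.
Proof.
move=> lF l'F [p [sp before]] [p' [sp' before']].
have [e [pe _]] := exists_private_edge lF; have [e' [pe' _]] := exists_private_edge l'F.
by have := before e e' pe pe'; have := before' e' e pe' pe; rewrite (spath_uniq tree sp sp'); lia.
Qed.

Lemma prec_cuts l1 l2 : anc t b -> l1 \in Fu -> l2 \in Fu -> prec E t b Fu l1 l2 ->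
  exists c1 c2, [/\ cuts c1 l1, ~~ cuts c1 l2, cuts c2 l2, anc c1 c2 & ~~ anc c1 t /\ anc c2 b].
Proof.
move=> anc_tb l1F l2F prec12; have [p [sp before]] := prec12.
have [e1 [pe1 l1e1]] := exists_private_edge l1F; have [e2 [pe2 l2e2]] := exists_private_edge l2F.
have lt12 := before e1 e2 pe1 pe2.
have on_p e : tree_pathE E t b e -> e \in path_edges t p.
  by case=> q [sq]; rewrite (spath_uniq tree sp sq).
case: (pe1) (pe2) => [/[dup] /on_p e1p /(tree_pathEP tree r) [c1 [c1r e1c1 c1tb]] e1_priv].
case=> [/[dup] /on_p e2p /(tree_pathEP tree r) [c2 [c2r e2c2 c2tb]] _].
move: c1tb c2tb; rewrite !(anc_down _ anc_tb) => /andP [c1t _] /andP [_ c2b].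
subst e1 e2; exists c1, c2; split=> //.
- exact: (link_edges_cuts c1r l1e1).
- have l21 : l2 != l1 by apply/eqP => l21; subst l2; exact: (prec_asym l1F l1F prec12 prec12).
  have [x [y [l2xy xy _]]] := l2e2.
  apply/negP => c1l2; apply: e1_priv; exists l2; split=> //.
  by move: c1l2; rewrite l2xy; apply: (cuts_link_edges xy c1r).
- exact: (link_edges_cuts c2r l2e2).
- exact: (tree_path_order anc_tb sp c1r c2r e1p e2p lt12).
Qed.

Lemma arcs_of_pred l1 l1' l2 :
  arcs_of E t b Fu l1 l2 -> arcs_of E t b Fu l1' l2 -> l1 = l1'.
Proof.
case=> s [perm_s sorted_s [i [lt_i -> e2]]] [s' [perm_s' sorted_s' [i' [lt_i' -> e2']]]].
have ss' : s = s'.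
  apply: (perm_nth_sorted_eq _ sorted_s sorted_s'); last first.
    by rewrite (perm_trans perm_s) // perm_sym.
  by move=> x y xs ys; apply: prec_asym; rewrite -mem_enum -(perm_mem perm_s).
subst s'; have uniq_s : uniq s by rewrite (perm_uniq perm_s) enum_uniq.
by move: e2'; rewrite e2 => /eqP; rewrite nth_uniq // eqSS => /eqP ->.
Qed.

End MinimalCover.

Section DependencyGraph.
Variables (V : finType) (E F U : {set {set V}}) (r : V) (Fu : {set V} -> {set {set V}}).
Hypothesis tree : is_spanning_tree E.
Hypothesis Fu_spec : forall u t b, u \in U -> u = [set t; b] -> t != b ->
  ancestor E r t b -> is_Fu E F r t b (Fu u).

Local Notation lca := (lca tree r).
Local Notation depth := (depth tree r).
Local Notation pedge := (pedge tree r).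

Lemma dep_arc_lca u l1 l2 : dep_arc E r U Fu u l1 l2 ->
  depth (lca l1) < depth (lca l2) /\ link_edges E u (pedge (lca l2)).
Proof.
case=> uU [t [b [eu tb anc_tb arcs]]].
have [_ [_ _ cover minimal]] := Fu_spec uU eu tb anc_tb.
have [l1F l2F prec12] := arcs_of_prec arcs.
have [c1 [c2 [c1l1 c1l2 c2l2 c1c2 [c1t c2b]]]] :=
  prec_cuts cover minimal (proj1 (ancestorP tree r t b) anc_tb) l1F l2F prec12.
split; first exact: (lca_lt c1l1 c1l2 c2l2 c1c2).
by exists t, b; split=> //; apply: (tree_path_pedge_lca c1l2 c2l2 c1c2 c1t c2b).
Qed.

Lemma dep_arc_pred u l1 l1' l2 :
  dep_arc E r U Fu u l1 l2 -> dep_arc E r U Fu u l1' l2 -> l1 = l1'.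
Proof.
case=> uU [t [b [eu tb anc_tb arcs]]] [_ [t' [b' [eu' tb' anc_tb' arcs']]]].
have [_ [_ _ cover minimal]] := Fu_spec uU eu tb anc_tb.
have [tt' bb'] : t' = t /\ b' = b.
  by apply: (up_link_ends (tree := tree) (r := r)); rewrite -?eu // -ancestorP.
subst t' b'.
exact: (arcs_of_pred tree cover minimal arcs arcs').
Qed.

End DependencyGraph.

Theorem lemma10 (V : finType) (E L F U : {set {set V}}) (r : V)
    (Fu : {set V} -> {set {set V}}) :
  is_spanning_tree E ->
  (forall l, l \in L -> #|l| = 2) ->
  F \subset L ->
  (forall e, e \in E -> exists l, l \in F /\ link_edges E l e) ->
  U \subset L ->
  (forall u, u \in U -> up_link E r u) ->
  (forall u u', u \in U -> u' \in U -> u != u' ->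
     forall e, link_edges E u e -> link_edges E u' e -> False) ->
  (forall u t b, u \in U -> u = [set t; b] -> t != b -> ancestor E r t b ->
     is_Fu E F r t b (Fu u)) ->
  branching (dep_arc E r U Fu).
Proof.
move=> tree _ _ _ _ _ disjoint Fu_spec; split.
- have lca_deeper x y : (exists u, dep_arc E r U Fu u x y) ->
      depth tree r (lca tree r x) < depth tree r (lca tree r y).
    by case=> u /(dep_arc_lca tree Fu_spec) [].
  by move=> l /(clos_trans_ltn lca_deeper); rewrite ltnn.
- move=> u u' l1 l1' l2 arc arc'.
  have [_ u_l2] := dep_arc_lca tree Fu_spec arc.
  have [_ u'_l2] := dep_arc_lca tree Fu_spec arc'.
  have [uu'|neq] := eqVneq u u'; last by case: (disjoint _ _ arc.1 arc'.1 neq _ u_l2 u'_l2).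
  by subst u'; split=> //; apply: (dep_arc_pred tree Fu_spec arc arc').
Qed.
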